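(* Let $\mathcal N=(\mathcal L,\mathcal I,D_{\mathcal L})$ be a network (with a general collision profile) of character $D^*$, and let $S$ be a framed schedule of frame length $T_F\ge 3D^*+1$. Then $S$ is collision free if and only if for every $k\ge0$, every link $l$ that is active in frame $k$, and every $\phi\in\mathcal I(l)$, some $l'\in\phi$ is inactive in frame $k$.
   Context: A network is a triple $\mathcal N=(\mathcal L,\mathcal I,D_{\mathcal L})$ where $\mathcal L$ is a finite nonempty set of links, each $\mathcal I(l)$ is a collection of nonempty subsets of $\mathcal L$, and $D_{\mathcal L}$ assigns an integer $D_{\mathcal L}(l,l')$ to every pair with $l'\in\phi$ for some $\phi\in\mathcal I(l)$. The character is $D^*=\max_{l}\max_{\phi\in\mathcal I(l)}\max_{l'\in\phi}|D_{\mathcal L}(l,l')|$ (0 if there are no collision sets). A schedule is a map $S:\mathcal L\times\mathbb Z\to\{0,1\}$; $S(l,t)$ has a collision if there is $\phi\in\mathcal I(l)$ with $S(l',t+D_{\mathcal L}(l,l'))=1$ for all $l'\in\phi$; $S$ is collision free if no $(l,t)$ with $S(l,t)=1$ has a collision. For an integer $T_F\ge D^*+1$, a framed schedule of frame length $T_F$ is a schedule $S$ with $S(l,t)=0$ for $t<0$, such that for every $k\ge0$ (frame $k$ consists of timeslots $kT_F,\dots,(k+1)T_F-1$) and every $l$: $S(l,kT_F+i)=0$ for $i=T_F-D^*,\dots,T_F-1$, and the values $S(l,kT_F+i)$, $i=0,\dots,T_F-D^*-1$, are all equal. Link $l$ is active in frame $k$ if these values equal 1, and inactive otherwise. *)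

From mathcomp Require Import all_boot all_order all_algebra.
Set Implicit Arguments. Unset Strict Implicit. Unset Printing Implicit Defensive.
Import Order.TTheory GRing.Theory Num.Theory.

(* A network: finite nonempty link set L (a finType with #|L| > 0),
   collision profile I l (a collection of nonempty subsets of L),
   and relative delays D l l' (only relevant when l' lies in some phi in I l). *)
Record network := Network {
  link : finType;
  link_nonempty : 0 < #|link|;
  coll : link -> {set {set link}};
  coll_nonempty : forall l phi, phi \in coll l -> phi != set0;
  delay : link -> link -> int
}.

(* Character D* (0 when there are no collision sets). *)
Definition character (N : network) : nat :=
  \max_(l : link N) \max_(phi in coll l) \max_(l' in phi) `|delay l l'|%N.

Definition schedule (N : network) := link N -> int -> bool.

Definition has_collision (N : network) (S : schedule N) (l : link N) (t : int) : Prop :=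
  exists2 phi, phi \in coll l & forall l', l' \in phi -> S l' (t + delay l l')%R.

Definition collision_free (N : network) (S : schedule N) : Prop :=
  forall l t, S l t -> ~ has_collision S l t.

Definition framed (N : network) (TF : nat) (S : schedule N) : Prop :=
  [/\ (character N).+1 <= TF,
      (forall l (t : int), (t < 0)%R -> S l t = false),
      (forall (k : nat) l (i : nat), TF - character N <= i < TF ->
          S l (Posz (k * TF + i)) = false) &
      (forall (k : nat) l (i j : nat), i < TF - character N -> j < TF - character N ->
          S l (Posz (k * TF + i)) = S l (Posz (k * TF + j)))].

Definition active (N : network) (TF : nat) (S : schedule N) (k : nat) (l : link N) : Prop :=
  forall i : nat, i < TF - character N -> S l (Posz (k * TF + i)).

From mathcomp Require Import all_boot all_order all_algebra.
From mathcomp Require Import zify.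

(* Write D for the character D* of the network.  In a framed schedule each
   frame [k TF, (k+1) TF) consists of an "active window" of TF - D slots, on
   which every link is constantly on or off, followed by a guard interval of
   D silent slots; hence S(l, t) = 1 iff t lies in the active window of its
   frame and l is active in that frame ([scheduledE], [active_iff]).

   Sufficiency of the frame condition ([collision_free_of_frame_condition])
   needs only TF >= D + 1: a collision of l at t involves slots t + d with
   |d| <= D, and two scheduled slots at distance <= D cannot lie in different
   active windows, since consecutive windows are separated by the D-slot guard
   ([same_frame]); so every l' of the colliding set would be active in the
   frame of t.
   Necessity ([collision_of_all_active]) uses TF >= 3D + 1: if l and every
   member of some phi in I(l) are active in frame k, then l collides at slot
   k TF + D, whose shifts k TF + D + d all lie in [k TF, k TF + 2D], inside the
   active window. *)

Lemma delay_bound {N : network} {l l' : link N} {phi : {set link N}} :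
  phi \in coll l -> l' \in phi -> (`|delay l l'| <= character N)%N.
Proof.
move=> phi_l l'_phi; rewrite /character.
apply: leq_trans (leq_bigmax_cond _ (isT : predT l)).
apply: leq_trans (leq_bigmax_cond _ phi_l).
exact: (leq_bigmax_cond _ l'_phi).
Qed.

Lemma same_frame (TF D n m : nat) :
  n %% TF < TF - D -> m %% TF < TF - D -> m <= n + D -> n <= m + D ->
  m %/ TF = n %/ TF.
Proof.
move=> + + le_m le_n.
have Em := divn_eq m TF; have En := divn_eq n TF.
move: Em En; move: (m %/ TF) (n %/ TF) (m %% TF) (n %% TF).
move=> q k r i Em En lt_i lt_r; subst m n.
have [lt_qk|lt_kq|//] := ltngtP q k.
- have : q * TF + TF <= k * TF by rewrite -mulSnr leq_mul2r lt_qk orbT.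
  lia.
- have : k * TF + TF <= q * TF by rewrite -mulSnr leq_mul2r lt_kq orbT.
  lia.
Qed.

Section FramedSchedule.

Context {N : network} {TF : nat} {S : schedule N}.
Hypothesis framed_S : framed TF S.

Local Notation D := (character N).

Lemma frame_val (l : link N) (k j : nat) :
  j < TF - D -> S l (Posz (k * TF + j)) = S l (Posz (k * TF)).
Proof.
case: framed_S => le_D_TF _ _ frame_const lt_j.
by rewrite -[X in _ = S l (Posz X)]addn0; apply: frame_const => //; lia.
Qed.

Lemma active_iff {k : nat} {l : link N} :
  active TF S k l <-> S l (Posz (k * TF)).
Proof.
case: framed_S => le_D_TF _ _ _; split.
  by move=> act_l; rewrite -[k * TF]addn0; apply: act_l; lia.
by move=> S_l i lt_i; rewrite frame_val.
Qed.

Lemma scheduledE (l : link N) (n : nat) :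
  S l (Posz n) = (n %% TF < TF - D) && S l (Posz (n %/ TF * TF)).
Proof.
case: framed_S => le_D_TF _ guard _.
rewrite {1}(divn_eq n TF); case: ltnP => [lt_r|le_r] /=; first by rewrite frame_val.
by apply: guard; rewrite le_r ltn_pmod //; lia.
Qed.

Lemma shifted_active {l' : link N} {n : nat} {d : int} :
  (`|d| <= D)%N -> n %% TF < TF - D -> S l' (Posz n + d)%R ->
  S l' (Posz (n %/ TF * TF)).
Proof.
case: framed_S => _ before0 _ _ le_d lt_n.
case E: (Posz n + d)%R => [m|m]; last by rewrite before0.
rewrite scheduledE => /andP[lt_m S_m].
by rewrite -(@same_frame TF D n m) //; lia.
Qed.

Lemma collision_free_of_frame_condition :
  (forall (k : nat) (l : link N), active TF S k l ->
     forall phi, phi \in coll l -> exists2 l', l' \in phi & ~ active TF S k l') ->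
  collision_free S.
Proof.
case: framed_S => _ before0 _ _ frame_cond l [n|n] S_l [phi phi_l coll_l];
  last by rewrite before0 in S_l.
move: S_l; rewrite scheduledE => /andP[lt_n S_l].
have [l' l'_phi /active_iff inactive_l'] :=
  frame_cond (n %/ TF) l (proj2 active_iff S_l) phi phi_l.
apply: inactive_l'.
exact: shifted_active (delay_bound phi_l l'_phi) lt_n (coll_l l' l'_phi).
Qed.

Lemma collision_of_all_active {k : nat} {l : link N} {phi : {set link N}} :
  3 * D + 1 <= TF -> S l (Posz (k * TF)) -> phi \in coll l ->
  (forall l', l' \in phi -> S l' (Posz (k * TF))) ->
  S l (Posz (k * TF + D)) /\ has_collision S l (Posz (k * TF + D)).
Proof.
move=> le_TF S_l phi_l all_on; split; first by rewrite frame_val //; lia.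
exists phi => // l' l'_phi.
have le_d := delay_bound phi_l l'_phi.
have -> : (Posz (k * TF + D) + delay l l' =
           Posz (k * TF + absz (Posz D + delay l l')%R))%R by lia.
by rewrite frame_val ?all_on //; lia.
Qed.

End FramedSchedule.

Theorem lemma2 (N : network) (TF : nat) (S : schedule N) :
  framed TF S -> 3 * character N + 1 <= TF ->
  (collision_free S <->
   forall (k : nat) (l : link N), active TF S k l ->
     forall phi, phi \in coll l -> exists2 l', l' \in phi & ~ active TF S k l').
Proof.
move=> framed_S le_TF; split; last exact: collision_free_of_frame_condition.
move=> coll_free k l /(active_iff framed_S) S_l phi phi_l.
pose off := [pred l' | (l' \in phi) && ~~ S l' (Posz (k * TF))].
have [l' /andP[l'_phi off_l'] | none_off] := pickP off.
  by exists l' => // /(active_iff framed_S); apply/negP.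
have all_on l' : l' \in phi -> S l' (Posz (k * TF)).
  by move=> l'_phi; move: (none_off l') => /=; rewrite l'_phi => /negbFE.
have [S_l' coll_l] := collision_of_all_active framed_S le_TF S_l phi_l all_on.
by case: (coll_free _ _ S_l').
Qed.
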